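(* Let $G$ and $H$ be graphs such that the direct product $G\times H$ is a balanced distance magic graph, and let $\ell$ be a balanced distance magic labeling of $G\times H$ in which $(g,h)$ and $(g',h)$ are twins and $(g,h')$ and $(g'',h')$ are twins, where $g''\neq g'$. Let $\widehat\ell$ be obtained from $\ell$ by exchanging the labels of $(g',h')$ and $(g'',h')$, i.e. $\widehat\ell(g',h')=\ell(g'',h')$, $\widehat\ell(g'',h')=\ell(g',h')$, and $\widehat\ell(a,b)=\ell(a,b)$ for all other vertices. Then $\widehat\ell$ is a balanced distance magic labeling of $G\times H$ in which $(g,h')$ and $(g',h')$ are twins.
   Context: All graphs are finite and simple. For a graph $G$ and vertex $x$, $N(x)=N_G(x)$ is the (open) neighborhood of $x$. A distance magic labeling of a graph $G$ of order $N$ is a bijection $\ell\colon V(G)\to\{1,\dots,N\}$ for which there is a constant $k$ such that the weight $w(x)=\sum_{y\in N(x)}\ell(y)$ equals $k$ for every $x\in V(G)$. A balanced distance magic labeling of a graph $G$ with an even number $N$ of vertices is a distance magic labeling $\ell$ such that for every $w\in V(G)$: whenever $u\in N(w)$ has $\ell(u)=i$, there is $v\in N(w)$ with $\ell(v)=N+1-i$. Under such $\ell$, the vertices labeled $i$ and $N+1-i$ are called twins (with respect to $\ell$). $G$ is a balanced distance magic graph if it has an even number of vertices and admits a balanced distance magic labeling. The direct product $G\times H$ has vertex set $V(G)\times V(H)$, with $(g,h)$ adjacent to $(g',h')$ iff $gg'\in E(G)$ and $hh'\in E(H)$. *)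

(* A simple graph is a finType of vertices with a
   symmetric irreflexive relation. *)
From mathcomp Require Import all_boot.
Set Implicit Arguments. Unset Strict Implicit. Unset Printing Implicit Defensive.

Definition dprod_rel (T1 T2 : finType) (e1 : rel T1) (e2 : rel T2) : rel (T1 * T2) :=
  fun x y => e1 x.1 y.1 && e2 x.2 y.2.

(* l : V -> {1..N} bijection, N = #|V| (injective into {1..N} of size N) *)
Definition is_labeling (T : finType) (l : T -> nat) : Prop :=
  injective l /\ forall x, 0 < l x <= #|T|.

Definition weight (T : finType) (e : rel T) (l : T -> nat) (x : T) : nat :=
  \sum_(y | e x y) l y.

Definition distance_magic_labeling (T : finType) (e : rel T) (l : T -> nat) : Prop :=
  is_labeling l /\ exists k, forall x, weight e l x = k.

Definition balanced_dml (T : finType) (e : rel T) (l : T -> nat) : Prop :=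
  ~~ odd #|T| /\ distance_magic_labeling e l /\
  forall w u, e w u -> exists v, e w v /\ l v = #|T|.+1 - l u.

Definition balanced_dm_graph (T : finType) (e : rel T) : Prop :=
  exists l, balanced_dml e l.

Definition twins (T : finType) (l : T -> nat) (a b : T) : Prop :=
  l a + l b = #|T|.+1.

Definition swap_labels (T : finType) (l : T -> nat) (a b : T) : T -> nat :=
  fun x => if x == a then l b else if x == b then l a else l x.

From mathcomp Require Import all_boot.
From mathcomp Require Import zify.
Set Implicit Arguments. Unset Strict Implicit.

(* Exchanging the labels of two vertices a, b that have the same open
   neighbourhood preserves being a balanced distance magic labeling: the new
   labeling is l composed with the transposition (a b), which is an
   automorphism of the graph.  So lemma3 reduces to showing that (g',h') and
   (g'',h') have the same neighbourhood in G x H.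
   In a balanced labeling, twins have the same neighbourhood (the balancing
   partner of a twin inside N(w) is forced by injectivity).  In G x H,
   N(g,h) = N(g',h) gives N_G(g) = N_G(g') as soon as h has a neighbour, and
   then N(g',h') = N(g,h') = N(g'',h').  If h has no neighbour, the magic
   constant is 0, the graph is edgeless and the claim is trivial. *)

Section SameNeighbourhood.
Variable T : finType.
Variable e : rel T.
Hypothesis e_sym : symmetric e.

Definition same_nbhd (a b : T) : Prop := forall w, e a w = e b w.

Definition transp (a b x : T) : T :=
  if x == a then b else if x == b then a else x.

Lemma transpK a b : involutive (transp a b).
Proof.
move=> x; rewrite /transp.
case: (eqVneq x a) => [->|xa].
  by rewrite eqxx; case: (eqVneq b a) => [->|]; rewrite ?eqxx.
case: (eqVneq x b) => [->|xb]; first by rewrite eqxx.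
by rewrite (negPf xa) (negPf xb).
Qed.

Lemma swap_labelsE (l : T -> nat) a b : swap_labels l a b =1 l \o transp a b.
Proof. by move=> x; rewrite /swap_labels /transp /=; case: ifP => _ //; case: ifP. Qed.

Lemma same_nbhd_transp a b : same_nbhd a b -> forall x y, e x (transp a b y) = e x y.
Proof.
move=> hab x y; rewrite /transp.
case: (eqVneq y a) => [->|_]; first by rewrite e_sym -hab e_sym.
by case: (eqVneq y b) => [->|_] //; rewrite e_sym hab e_sym.
Qed.

Lemma swap_balanced (l : T -> nat) a b :
  same_nbhd a b -> balanced_dml e l -> balanced_dml e (swap_labels l a b).
Proof.
move=> hab [hodd [[[linj lbd] [k hk]] hbal]].
have eT := same_nbhd_transp hab.
split=> //; split; first split.
- split=> [x y|x]; rewrite !swap_labelsE //=.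
  by move/linj/(congr1 (transp a b)); rewrite !transpK.
- exists k => x; rewrite -(hk x) /weight.
  rewrite (reindex_inj (can_inj (transpK a b))) /=.
  by apply: eq_big => y; rewrite ?eT // swap_labelsE /= transpK.
- move=> w u hwu.
  have [v [hwv hv]] : exists v, e w v /\ l v = #|T|.+1 - l (transp a b u).
    by apply: hbal; rewrite eT.
  by exists (transp a b v); rewrite eT !swap_labelsE /= transpK hv.
Qed.

(* Twins in a balanced labeling have the same neighbourhood: the partner
   that balances a twin in N(w) must be the other twin. *)
Lemma twins_same_nbhd (l : T -> nat) a b :
  balanced_dml e l -> twins l a b -> same_nbhd a b.
Proof.
move=> [_ [[[linj _] _] hbal]] htw.
have into : forall a' b', twins l a' b' -> forall w, e w a' -> e w b'.
  move=> a' b' ht w /hbal [v [hv hlv]].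
  suff -> : b' = v by [].
  by apply: linj; rewrite hlv; move: ht; rewrite /twins; lia.
move=> w; rewrite e_sym [e b w]e_sym; apply/idP/idP; first exact: into.
by apply: into; move: htw; rewrite /twins; lia.
Qed.

Lemma twins_neq (l : T -> nat) a b : ~~ odd #|T| -> twins l a b -> a != b.
Proof.
move=> hodd; rewrite /twins; case: (eqVneq a b) => // -> /(congr1 odd).
by rewrite oddD addbb /= (negPf hodd).
Qed.

(* If a vertex of a distance magic graph is isolated, the magic constant is 0
   and, labels being positive, the whole graph is edgeless. *)
Lemma magic_isolated_edgeless (l : T -> nat) x :
  distance_magic_labeling e l -> (forall y, ~~ e x y) -> forall y z, e y z = false.
Proof.
move=> [[_ lbd] [k hk]] xiso y z; apply/negbTE/negP => eyz.
have : weight e l y = 0 by rewrite hk -(hk x) /weight big_pred0 // => w; apply/negbTE.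
rewrite /weight (bigD1 z) //= => /eqP; rewrite addn_eq0 => /andP [/eqP lz _].
by have /andP [] := lbd z; rewrite lz.
Qed.

Lemma twins_swap (l : T -> nat) a b c :
  a != b -> a != c -> twins l a b -> twins (swap_labels l c b) a c.
Proof.
move=> ab ac; rewrite /twins /swap_labels eqxx.
by rewrite (negPf ac) (negPf ab).
Qed.

End SameNeighbourhood.

Section DirectProduct.
Variables (TG TH : finType) (eG : rel TG) (eH : rel TH).
Hypotheses (symG : symmetric eG) (symH : symmetric eH).

Lemma dprod_sym : symmetric (dprod_rel eG eH).
Proof. by move=> [x1 x2] [y1 y2]; rewrite /dprod_rel /= symG symH. Qed.

Lemma dprod_same_nbhd_proj g g' h c :
  same_nbhd (dprod_rel eG eH) (g, h) (g', h) -> eH h c -> same_nbhd eG g g'.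
Proof.
by move=> hgg' hc a; have := hgg' (a, c); rewrite /dprod_rel /= hc !andbT.
Qed.

Lemma dprod_same_nbhd_lift g g' h' :
  same_nbhd eG g g' -> same_nbhd (dprod_rel eG eH) (g, h') (g', h').
Proof. by move=> hgg' [a b]; rewrite /dprod_rel /= hgg'. Qed.

End DirectProduct.

Theorem lemma3 (TG TH : finType) (eG : rel TG) (eH : rel TH)
  (symG : symmetric eG) (irrG : irreflexive eG)
  (symH : symmetric eH) (irrH : irreflexive eH)
  (l : TG * TH -> nat) (g g' g'' : TG) (h h' : TH) :
  balanced_dm_graph (dprod_rel eG eH) ->
  balanced_dml (dprod_rel eG eH) l ->
  twins l (g, h) (g', h) ->
  twins l (g, h') (g'', h') ->
  g'' != g' ->
  balanced_dml (dprod_rel eG eH) (swap_labels l (g', h') (g'', h')) /\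
  twins (swap_labels l (g', h') (g'', h')) (g, h') (g', h').
Proof.
move=> _ hb t1 t2 _.
have symE := dprod_sym symG symH.
have twins_gh := twins_same_nbhd symE hb t1.
have twins_gh' := twins_same_nbhd symE hb t2.
have [hodd [hdml _]] := hb.
have swapped_same : same_nbhd (dprod_rel eG eH) (g', h') (g'', h').
  case: (pickP (eH h)) => [c hc|hiso] w.
    have hgg' := dprod_same_nbhd_proj twins_gh hc.
    by rewrite -twins_gh' (dprod_same_nbhd_lift eH h' hgg').
  have edgeless := magic_isolated_edgeless hdml (x := (g, h)).
  by rewrite !edgeless // => -[y1 y2]; rewrite /dprod_rel /= hiso andbF.
split; first exact: swap_balanced.
have gg' : g != g' by move: (twins_neq hodd t1); apply: contra => /eqP ->.
apply: twins_swap (twins_neq hodd t2) _ t2.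
by apply: contra gg' => /eqP [->].
Qed.
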